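(* Let $\mathcal{P}_1,\mathcal{P}_2\subseteq\mathbb{R}^n$ be non-empty topologically closed convex polyhedra, where $\mathcal{P}_1=\mathrm{con}(\mathcal{C}_1)=\mathrm{gen}(\mathcal{G}_1)$ for a finite constraint system $\mathcal{C}_1$ and a generator system $\mathcal{G}_1=(R_1,P_1)$. Then $\mathcal{P}_1\uplus\mathcal{P}_2\neq\mathcal{P}_1\cup\mathcal{P}_2$ if and only if there exist a constraint $\beta_1\in\mathcal{C}_1$ and a generator $g_1$ of $\mathcal{G}_1$ (i.e., a ray in $R_1$ or a point in $P_1$) such that (1) $g_1$ saturates $\beta_1$, (2) $\mathcal{P}_2$ violates $\beta_1$, and (3) $\mathcal{P}_2$ does not subsume $g_1$.
   Context: A constraint is a non-strict linear inequality $\langle\mathbf{a},\mathbf{x}\rangle\le b$ with $\mathbf{a}\in\mathbb{R}^n\setminus\{\mathbf{0}\}$, $b\in\mathbb{R}$ (equalities are treated as pairs of inequalities). For a finite set $\mathcal{C}$ of constraints, $\mathrm{con}(\mathcal{C})=\{\mathbf{p}\in\mathbb{R}^n : \langle\mathbf{a},\mathbf{p}\rangle\le b \text{ for all } (\langle\mathbf{a},\mathbf{x}\rangle\le b)\in\mathcal{C}\}$; such sets are the (topologically closed convex) polyhedra. A generator system is a pair $(R,P)$ of finite sets $R=\{\mathbf{r}_1,\dots,\mathbf{r}_r\}$, $P=\{\mathbf{p}_1,\dots,\mathbf{p}_p\}\subseteq\mathbb{R}^n$ with $\mathbf{0}\notin R$, and $\mathrm{gen}((R,P))=\{\sum_i\rho_i\mathbf{r}_i+\sum_i\sigma_i\mathbf{p}_i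 : \rho_i\ge 0,\ \sigma_i\ge0,\ \sum_i\sigma_i=1\}$; elements of $R$ are called rays and elements of $P$ points of the generator system. A vector $\mathbf{r}\neq\mathbf{0}$ is a ray of a non-empty polyhedron $\mathcal{P}$ if $\mathbf{p}+\rho\mathbf{r}\in\mathcal{P}$ for all $\mathbf{p}\in\mathcal{P}$, $\rho\ge0$. A point $\mathbf{p}$ saturates the constraint $\langle\mathbf{a},\mathbf{x}\rangle\le b$ if $\langle\mathbf{a},\mathbf{p}\rangle=b$; a ray $\mathbf{r}$ saturates it if $\langle\mathbf{a},\mathbf{r}\rangle=0$. A polyhedron violates a constraint if some point of it does not satisfy the constraint. A polyhedron $\mathcal{P}$ subsumes a point $\mathbf{p}$ if $\mathbf{p}\in\mathcal{P}$, and subsumes a ray $\mathbf{r}$ if $\mathbf{r}$ is a ray of $\mathcal{P}$. $\mathcal{P}_1\uplus\mathcal{P}_2$ denotes the convex polyhedral hull, i.e., the smallest closed convex polyhedron containing $\mathcal{P}_1\cup\mathcal{P}_2$; if $\mathcal{P}_i=\mathrm{gen}((R_i,P_i))$ then $\mathcal{P}_1\uplus\mathcal{P}_2=\mathrm{gen}((R_1\cup R_2,P_1\cup P_2))$. *)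

From HB Require Import structures.
From mathcomp Require Import all_boot all_order all_algebra.
From mathcomp Require Import boolp classical_sets reals.
Set Implicit Arguments. Unset Strict Implicit. Unset Printing Implicit Defensive.
Import Order.TTheory GRing.Theory Num.Theory.
Local Open Scope ring_scope.
Local Open Scope classical_set_scope.

Section Polyhedra.
Variables (R : realType) (n : nat).

Definition dotp (a x : 'rV[R]_n) : R := \sum_(i < n) a 0 i * x 0 i.

(* a constraint <a, x> <= b, represented by the pair (a, b); a must be nonzero *)
Definition constraint := ('rV[R]_n * R)%type.
Definition valid_constraint (c : constraint) : Prop := c.1 != 0.
Definition valid_system (C : seq constraint) : Prop :=
  forall c, c \in C -> valid_constraint c.

Definition sat (c : constraint) (p : 'rV[R]_n) : Prop := dotp c.1 p <= c.2.

Definition con (C : seq constraint) : set 'rV[R]_n :=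
  [set p | forall c, c \in C -> sat c p].

Definition is_polyhedron (S : set 'rV[R]_n) : Prop :=
  exists C : seq constraint, valid_system C /\ S = con C.

Definition gen (Rs Ps : seq 'rV[R]_n) : set 'rV[R]_n :=
  [set x | exists (rho : 'I_(size Rs) -> R) (sigma : 'I_(size Ps) -> R),
     (forall i, 0 <= rho i) /\ (forall i, 0 <= sigma i) /\
     \sum_(i < size Ps) sigma i = 1 /\
     x = \sum_(i < size Rs) rho i *: Rs`_i + \sum_(i < size Ps) sigma i *: Ps`_i].

Definition valid_gen_system (Rs Ps : seq 'rV[R]_n) : Prop := 0 \notin Rs.

Definition is_ray (S : set 'rV[R]_n) (r : 'rV[R]_n) : Prop :=
  r != 0 /\ forall p rho, S p -> 0 <= rho -> S (p + rho *: r).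

Definition point_saturates (p : 'rV[R]_n) (c : constraint) : Prop := dotp c.1 p = c.2.
Definition ray_saturates (r : 'rV[R]_n) (c : constraint) : Prop := dotp c.1 r = 0.

Definition violates (S : set 'rV[R]_n) (c : constraint) : Prop :=
  exists p, S p /\ ~ sat c p.

Definition subsumes_point (S : set 'rV[R]_n) (p : 'rV[R]_n) : Prop := S p.
Definition subsumes_ray (S : set 'rV[R]_n) (r : 'rV[R]_n) : Prop := is_ray S r.

(* convex polyhedral hull: the intersection of all polyhedra containing
   S1 `|` S2, i.e. the smallest closed convex polyhedron containing the union *)
Definition poly_hull (S1 S2 : set 'rV[R]_n) : set 'rV[R]_n :=
  [set x | forall C : seq constraint, valid_system C ->
     S1 `|` S2 `<=` con C -> con C x].

End Polyhedra.

From HB Require Import structures.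
From mathcomp Require Import all_boot all_order all_algebra ring lra.
From mathcomp Require Import boolp classical_sets reals.
Import Order.TTheory GRing.Theory Num.Theory.
Local Open Scope ring_scope.
Local Open Scope classical_set_scope.

(* If a generator [g1] of [P1] saturates a constraint [b1] violated at some
   [q] in [P2], and [g1] is a point outside [P2] (resp. not a ray of [P2]),
   then [g1] moved slightly towards [q] (resp. [q] moved far along [g1]) is a
   point of the hull that violates [b1] and lies outside [P2].
   Conversely, let [x] be in the hull but in neither polyhedron. Some
   constraint [g] of [P2] fails at [x], so it also fails at some [s] in [P1],
   for otherwise [g] would hold on the whole hull. The segment from [s] to [x]
   leaves [P1] through a constraint [b] failing at [x], hence violated by
   [P2]. The exit point lies on the face of [P1] cut out by [b], which is
   generated by the generators saturating [b]; if all of them are subsumed by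
   [P2], the exit point is in [P2], yet it violates [g] like [s] and [x]. *)

Section Polyhedra.
Set Implicit Arguments. Unset Strict Implicit.
Variables (R : realType) (n : nat).
Implicit Types (a p q r s x y w : 'rV[R]_n) (c : constraint R n)
  (C : seq (constraint R n)) (Rs Ps : seq 'rV[R]_n) (S : set 'rV[R]_n).

Lemma dotpD a x y : dotp a (x + y) = dotp a x + dotp a y.
Proof. by rewrite /dotp -big_split; apply: eq_bigr => i _; rewrite mxE mulrDr. Qed.

Lemma dotpZ a (k : R) x : dotp a (k *: x) = k * dotp a x.
Proof. by rewrite /dotp mulr_sumr; apply: eq_bigr => i _; rewrite mxE mulrCA. Qed.

Lemma dotp0 a : dotp a 0 = 0.
Proof. by rewrite /dotp big1 // => i _; rewrite mxE mulr0. Qed.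

Lemma dotp_sum a (I : Type) (r : seq I) (P : pred I) (F : I -> 'rV[R]_n) :
  dotp a (\sum_(i <- r | P i) F i) = \sum_(i <- r | P i) dotp a (F i).
Proof. exact: (big_morph _ (dotpD a) (dotp0 a)). Qed.

Lemma dotp_segment a x y (t : R) :
  dotp a ((1 - t) *: x + t *: y) = dotp a x + t * (dotp a y - dotp a x).
Proof. by rewrite dotpD !dotpZ; ring. Qed.

Lemma sat_segment c x y (t : R) : 0 <= t <= 1 ->
  sat c x -> sat c y -> sat c ((1 - t) *: x + t *: y).
Proof.
rewrite /sat dotp_segment => /andP[t0 t1] hx hy.
have : t * dotp c.1 y <= t * c.2 by rewrite ler_wpM2l.
have : (1 - t) * dotp c.1 x <= (1 - t) * c.2 by rewrite ler_wpM2l ?subr_ge0.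
lra.
Qed.

Lemma notsat_lt c x : ~ sat c x -> c.2 < dotp c.1 x.
Proof. by move/negP; rewrite -ltNge. Qed.

Lemma notsat_segment c x y (t : R) : 0 <= t <= 1 ->
  ~ sat c x -> ~ sat c y -> ~ sat c ((1 - t) *: x + t *: y).
Proof.
move=> /andP[t0 t1] /notsat_lt cx /notsat_lt cy; apply/negP; rewrite -ltNge dotp_segment.
have [xy | yx] := leP (dotp c.1 x) (dotp c.1 y).
  have : 0 <= t * (dotp c.1 y - dotp c.1 x) by rewrite mulr_ge0 ?subr_ge0.
  lra.
have : 0 <= (1 - t) * (dotp c.1 x - dotp c.1 y) by rewrite mulr_ge0 ?subr_ge0 // ltW.
lra.
Qed.

Lemma not_violates S c : ~ violates S c -> S `<=` sat c.
Proof. by move=> nv y Sy; apply: contrapT => ncy; apply: nv; exists y. Qed.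

Lemma con_notP C x : ~ con C x -> exists2 c, c \in C & ~ sat c x.
Proof.
move=> nCx; apply: contrapT => nex; apply: nCx => c cC.
by apply: contrapT => ncx; apply: nex; exists c.
Qed.

Definition recedes S r := forall p (l : R), S p -> 0 <= l -> S (p + l *: r).

Lemma recedes_halfspace S r c :
  S !=set0 -> recedes S r -> S `<=` sat c -> dotp c.1 r <= 0.
Proof.
move=> [p Sp] Sr Sc; rewrite leNgt; apply/negP => cr0.
have pc : dotp c.1 p <= c.2 by exact: Sc.
pose l := (c.2 - dotp c.1 p + 1) / dotp c.1 r.
have l0 : 0 <= l by rewrite divr_ge0 ?ltW //; lra.
have := Sc _ (Sr _ _ Sp l0); rewrite /sat dotpD dotpZ divfK ?gt_eqF //; lra.
Qed.

Lemma recedes_con C r : (forall c, c \in C -> dotp c.1 r <= 0) -> recedes (con C) r.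
Proof.
move=> Cr p l Cp l0 c cC; have := Cp c cC; rewrite /sat dotpD dotpZ.
have : l * dotp c.1 r <= 0 by rewrite mulr_ge0_le0 ?Cr.
lra.
Qed.

Lemma not_recedes_con C r : ~ recedes (con C) r -> exists2 c, c \in C & 0 < dotp c.1 r.
Proof.
move=> nCr; apply: contrapT => nex; apply/nCr/recedes_con => c cC.
by rewrite leNgt; apply/negP => cr; apply: nex; exists c.
Qed.

Lemma recedes_con_sub S C r :
  S !=set0 -> recedes S r -> S `<=` con C -> recedes (con C) r.
Proof.
move=> S0 Sr SC; apply: recedes_con => c cC.
by apply: recedes_halfspace S0 Sr _ => p /SC/(_ c cC).
Qed.

Lemma gen_point Rs Ps p : p \in Ps -> gen Rs Ps p.
Proof.
move=> pP; pose k := Ordinal (etrans (index_mem p Ps) pP).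
have dk (i : 'I_(size Ps)) : i != k -> (i == k)%:R = 0 :> R by move/negbTE ->.
exists (fun => 0), (fun i => (i == k)%:R); split=> //; split.
  by move=> i; rewrite ler0n.
split; first by rewrite (bigD1 k) //= eqxx big1 ?addr0 // => i /dk.
rewrite big1 ?add0r => [|i _]; last by rewrite scale0r.
rewrite (bigD1 k) //= eqxx scale1r nth_index // big1 ?addr0 // => i /dk ->.
by rewrite scale0r.
Qed.

Lemma gen_recedes Rs Ps r : r \in Rs -> recedes (gen Rs Ps) r.
Proof.
move=> rR p l [rho [sigma [rho0 [sigma0 [sigma1 ->]]]]] l0.
pose k := Ordinal (etrans (index_mem r Rs) rR).
exists (fun i => rho i + (i == k)%:R * l), sigma; split.
  by move=> i; rewrite addr_ge0 ?mulr_ge0.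
do 2!split=> //.
under [X in _ = X + _]eq_bigr do rewrite scalerDl.
rewrite big_split /= [X in _ = _ + X + _](bigD1 k) //= eqxx mul1r nth_index //.
rewrite [\sum_(i < _ | i != k) _]big1 ?addr0 => [|i /negbTE ->]; last first.
  by rewrite mul0r scale0r.
by rewrite addrAC.
Qed.

Lemma dotp_comb a Rs Ps (rho : 'I_(size Rs) -> R) (sigma : 'I_(size Ps) -> R) :
  dotp a (\sum_i rho i *: Rs`_i + \sum_j sigma j *: Ps`_j) =
  \sum_i rho i * dotp a Rs`_i + \sum_j sigma j * dotp a Ps`_j.
Proof.
by rewrite dotpD !dotp_sum; congr (_ + _); apply: eq_bigr => i _; rewrite dotpZ.
Qed.

Section Combination.
Variables (Rs Ps : seq 'rV[R]_n) (rho : 'I_(size Rs) -> R) (sigma : 'I_(size Ps) -> R).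
Hypotheses (rho_ge0 : forall i, 0 <= rho i) (sigma_ge0 : forall j, 0 <= sigma j)
  (sigma_sum1 : \sum_j sigma j = 1).

Lemma sat_comb c :
  (forall i, rho i != 0 -> dotp c.1 Rs`_i <= 0) ->
  (forall j, sigma j != 0 -> sat c Ps`_j) ->
  sat c (\sum_i rho i *: Rs`_i + \sum_j sigma j *: Ps`_j).
Proof.
move=> cR cP; rewrite /sat dotp_comb.
have -> : c.2 = 0 + \sum_j sigma j * c.2 by rewrite add0r -mulr_suml sigma_sum1 mul1r.
apply: lerD.
  apply: sumr_le0 => i _; have [->|/cR] := eqVneq (rho i) 0; first by rewrite mul0r.
  exact: mulr_ge0_le0.
apply: ler_sum => j _; have [->|/cP] := eqVneq (sigma j) 0; first by rewrite !mul0r.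
exact: ler_wpM2l.
Qed.

(* The slacks of [beta] at the generators, weighted by the coefficients, sum to zero. *)
Lemma comb_saturated_support beta :
  (forall i : 'I_(size Rs), dotp beta.1 Rs`_i <= 0) ->
  (forall j : 'I_(size Ps), sat beta Ps`_j) ->
  point_saturates (\sum_i rho i *: Rs`_i + \sum_j sigma j *: Ps`_j) beta ->
  (forall i, rho i != 0 -> ray_saturates Rs`_i beta) /\
  (forall j, sigma j != 0 -> point_saturates Ps`_j beta).
Proof.
rewrite /point_saturates /ray_saturates dotp_comb => betaR betaP sat_eq.
have slackR0 i : 0 <= - (rho i * dotp beta.1 Rs`_i) by rewrite oppr_ge0 mulr_ge0_le0.
have slackP0 j : 0 <= sigma j * (beta.2 - dotp beta.1 Ps`_j).
  by rewrite mulr_ge0 // subr_ge0; exact: betaP.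
pose sR := \sum_i - (rho i * dotp beta.1 Rs`_i).
pose sP := \sum_j sigma j * (beta.2 - dotp beta.1 Ps`_j).
have sR0 : 0 <= sR by exact: sumr_ge0.
have sP0 : 0 <= sP by exact: sumr_ge0.
have sRP : sR + sP = 0.
  rewrite /sR /sP sumrN.
  under [X in _ + X]eq_bigr do rewrite mulrBr.
  by rewrite sumrB -mulr_suml sigma_sum1 mul1r; lra.
have sR_eq0 : sR = 0 by lra.
have sP_eq0 : sP = 0 by lra.
split=> [i ri0 | j sj0].
  have /eqP := psumr_eq0P (fun i _ => slackR0 i) sR_eq0 (i := i) isT.
  by rewrite oppr_eq0 mulf_eq0 (negbTE ri0) => /eqP.
have /eqP := psumr_eq0P (fun j _ => slackP0 j) sP_eq0 (i := j) isT.
by rewrite mulf_eq0 (negbTE sj0) subr_eq0 => /eqP.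
Qed.

End Combination.

Lemma gen_face_sub Rs Ps C beta w :
  gen Rs Ps `<=` sat beta -> con C !=set0 ->
  (forall r, r \in Rs -> ray_saturates r beta -> recedes (con C) r) ->
  (forall p, p \in Ps -> point_saturates p beta -> con C p) ->
  gen Rs Ps w -> point_saturates w beta -> con C w.
Proof.
move=> gen_beta C0 Rface Pface genw.
have betaR (i : 'I_(size Rs)) : dotp beta.1 Rs`_i <= 0.
  by apply: (recedes_halfspace _ _ gen_beta); [exists w | apply/gen_recedes/mem_nth].
have betaP (j : 'I_(size Ps)) : sat beta Ps`_j by apply/gen_beta/gen_point/mem_nth.
case: genw => rho [sigma [rho0 [sigma0 [sigma1 ->]]]] /(comb_saturated_support rho0 sigma0 sigma1 betaR betaP).
move=> [Rsat Psat] c cC; apply: sat_comb => // [i /Rsat | j /Psat].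
  move/(Rface _ (mem_nth 0 (ltn_ord i))) => Crec.
  by apply: recedes_halfspace C0 Crec _ => p /(_ c cC).
by move/(Pface _ (mem_nth 0 (ltn_ord j)))/(_ c cC).
Qed.

Lemma poly_hullU S1 S2 : S1 `|` S2 `<=` poly_hull S1 S2.
Proof. by move=> x Sx C _; apply. Qed.

Lemma poly_hull_segment S1 S2 x y (t : R) : 0 <= t <= 1 ->
  poly_hull S1 S2 x -> poly_hull S1 S2 y -> poly_hull S1 S2 ((1 - t) *: x + t *: y).
Proof.
by move=> t01 hx hy C vC sub c cC; apply: sat_segment t01 (hx C vC sub c cC) (hy C vC sub c cC).
Qed.

Lemma poly_hull_recedes S1 S2 r :
  S1 !=set0 -> recedes S1 r -> recedes (poly_hull S1 S2) r.
Proof.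
move=> S10 S1r x l hx l0 C vC sub; apply: (recedes_con_sub S10 S1r) => //.
  by move=> y S1y; apply: sub; left.
exact: hx.
Qed.

Lemma poly_hull_sat S1 S2 c :
  valid_constraint c -> S1 `|` S2 `<=` sat c -> poly_hull S1 S2 `<=` sat c.
Proof.
move=> vc sub x /(_ [:: c]) hx; apply: hx; last exact: mem_head.
  by move=> d; rewrite inE => /eqP ->.
by move=> y /sub cy d; rewrite inE => /eqP ->.
Qed.

Lemma exit_ratioP (u v b : R) : u <= b -> b < v ->
  [/\ 0 <= (b - u) / (v - u), (b - u) / (v - u) < 1 & u + (b - u) / (v - u) * (v - u) = b].
Proof.
move=> ub bv; have vu : 0 < v - u by lra.
split; first by apply: divr_ge0; lra.
  by rewrite ltr_pdivrMr // mul1r; lra.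
by rewrite divfK ?gt_eqF //; lra.
Qed.

(* The segment from [s] to [x] leaves [con C] through the constraint whose
   boundary it crosses first. *)
Lemma con_segment_exit C s x : con C s -> ~ con C x ->
  exists c (t : R), [/\ c \in C, ~ sat c x, 0 <= t <= 1,
    con C ((1 - t) *: s + t *: x) & point_saturates ((1 - t) *: s + t *: x) c].
Proof.
move=> Cs /con_notP[c0 c0C nc0x].
pose ratio c := (c.2 - dotp c.1 s) / (dotp c.1 x - dotp c.1 s).
pose viol (i : 'I_(size C)) := ~~ `[< sat (nth c0 C i) x >].
pose i0 := Ordinal (etrans (index_mem c0 C) c0C).
have viol0 : viol i0 by rewrite /viol nth_index //; apply/asboolPn.
case: (arg_minP (fun i : 'I_(size C) => ratio (nth c0 C i)) viol0) => i /asboolPn nbx ratio_min.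
set b := nth c0 C i in nbx ratio_min *; have bC : b \in C by exact: mem_nth.
move: (exit_ratioP (Cs b bC) (notsat_lt nbx)); rewrite -/(ratio b) => -[t0 t1 tb].
have t01 : 0 <= ratio b <= 1 by rewrite t0 ltW.
exists b, (ratio b); split => //; last by rewrite /point_saturates dotp_segment.
move=> c cC; have [cx | ncx] := EM (sat c x).
  exact: sat_segment t01 (Cs c cC) cx.
have cx := notsat_lt ncx; move: (exit_ratioP (Cs c cC) cx); rewrite -/(ratio c) => -[_ _ tc].
have /ratio_min : viol (Ordinal (etrans (index_mem c C) cC)).
  by rewrite /viol nth_index //; apply/asboolPn.
rewrite /= nth_index // => le_ratio.
have xs : 0 <= dotp c.1 x - dotp c.1 s by have := Cs c cC; rewrite /sat; lra.
have := ler_wpM2r xs le_ratio.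
rewrite /sat dotp_segment; lra.
Qed.

Lemma poly_hull_sub_union S1 C1 R1 P1 C2 :
  valid_system C1 -> valid_system C2 -> S1 = con C1 -> S1 = gen R1 P1 ->
  con C2 !=set0 ->
  (forall beta, beta \in C1 -> violates (con C2) beta ->
     (forall r, r \in R1 -> ray_saturates r beta -> is_ray (con C2) r) /\
     (forall p, p \in P1 -> point_saturates p beta -> con C2 p)) ->
  poly_hull S1 (con C2) `<=` S1 `|` con C2.
Proof.
move=> vC1 vC2 E1 G1 C20 faces x hx.
have [S1x | nS1x] := EM (S1 x); first by left.
have [C2x | nC2x] := EM (con C2 x); [by right | exfalso].
have [g gC2 ngx] := con_notP nC2x.
have [s [S1s ngs]] : violates S1 g.
  apply: contrapT => /not_violates S1g; apply/ngx/(poly_hull_sat (vC2 _ gC2) _ hx).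
  by move=> y [/S1g | /(_ g gC2)].
rewrite E1 in S1s nS1x.
have [b [t [bC nbx t01 C1w wb]]] := con_segment_exit S1s nS1x.
have [Rface Pface] : (forall r, r \in R1 -> ray_saturates r b -> is_ray (con C2) r) /\
                     (forall p, p \in P1 -> point_saturates p b -> con C2 p).
  apply: faces => //; apply: contrapT => /not_violates C2b.
  apply/nbx/(poly_hull_sat (vC1 _ bC) _ hx).
  by move=> y [| /C2b //]; rewrite E1 => /(_ b bC).
have C2w : con C2 ((1 - t) *: s + t *: x).
  apply: (gen_face_sub _ C20 (fun r rR rb => (Rface r rR rb).2) Pface _ wb).
    by rewrite -G1 E1 => y /(_ b bC).
  by rewrite -G1 E1.
exact: (notsat_segment t01 ngs ngx (C2w g gC2)).
Qed.

Lemma poly_hull_escape_ray S1 C2 beta q r :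
  S1 !=set0 -> S1 `<=` sat beta -> recedes S1 r -> ray_saturates r beta ->
  con C2 q -> ~ sat beta q -> ~ recedes (con C2) r ->
  exists2 z, poly_hull S1 (con C2) z & ~ (S1 `|` con C2) z.
Proof.
move=> S10 S1beta S1r rbeta C2q nbq /not_recedes_con[c cC cr].
have qc : dotp c.1 q <= c.2 by exact: C2q.
pose l := (c.2 - dotp c.1 q + 1) / dotp c.1 r.
have l0 : 0 <= l by rewrite divr_ge0 ?ltW //; lra.
exists (q + l *: r).
  by apply: (poly_hull_recedes S10 S1r _ l0); apply: poly_hullU; right.
case=> [/S1beta | /(_ c cC)]; rewrite /sat dotpD dotpZ.
  by rewrite rbeta mulr0 addr0.
rewrite /l divfK ?gt_eqF //; lra.
Qed.

Lemma poly_hull_escape_point S1 C2 beta p q :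
  S1 `<=` sat beta -> S1 p -> point_saturates p beta -> ~ con C2 p ->
  con C2 q -> ~ sat beta q ->
  exists2 z, poly_hull S1 (con C2) z & ~ (S1 `|` con C2) z.
Proof.
move=> S1beta S1p pbeta /con_notP[c cC ncp] C2q nbq.
have cp := notsat_lt ncp; have bq := notsat_lt nbq.
have cq : dotp c.1 q <= c.2 by exact: C2q.
(* At the new point the value of [c] is half-way between [c.2] and its value at [p]. *)
pose t := (dotp c.1 p - c.2) / (2 * (dotp c.1 p - dotp c.1 q)).
have dpq : 0 < 2 * (dotp c.1 p - dotp c.1 q) by lra.
have t0 : 0 < t by rewrite divr_gt0 //; lra.
have te : t * (2 * (dotp c.1 p - dotp c.1 q)) = dotp c.1 p - c.2.
  by rewrite divfK ?gt_eqF.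
have t1 : t <= 1 by rewrite ler_pdivrMr // mul1r; lra.
exists ((1 - t) *: p + t *: q).
  by apply: poly_hull_segment; rewrite ?t1 ?ltW //; apply: poly_hullU; [left | right].
case=> [/S1beta | /(_ c cC)]; rewrite /sat dotp_segment; last lra.
have : 0 < t * (dotp beta.1 q - beta.2) by apply: mulr_gt0; lra.
rewrite pbeta; lra.
Qed.

End Polyhedra.

Theorem theorem3 (R : realType) (n : nat)
  (S1 S2 : set 'rV[R]_n) (C1 : seq (constraint R n)) (R1 P1 : seq 'rV[R]_n) :
  valid_system C1 -> valid_gen_system R1 P1 ->
  S1 = con C1 -> S1 = gen R1 P1 ->
  is_polyhedron S2 ->
  S1 !=set0 -> S2 !=set0 ->
  (poly_hull S1 S2 <> S1 `|` S2 <->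
   exists beta1, beta1 \in C1 /\
     ((exists r, r \in R1 /\ ray_saturates r beta1 /\ violates S2 beta1 /\
                 ~ subsumes_ray S2 r) \/
      (exists p, p \in P1 /\ point_saturates p beta1 /\ violates S2 beta1 /\
                 ~ subsumes_point S2 p))).
Proof.
move=> vC1 vG E1 G1 [C2 [vC2 ->]] S10 C20; split.
  move=> hull_neq; apply: contrapT => no_witness.
  apply/hull_neq/seteqP; split; last exact: poly_hullU.
  apply: (poly_hull_sub_union vC1 vC2 E1 G1 C20) => beta bC viol.
  split=> [r rR rb | p pP pb]; apply: contrapT => nsub; apply: no_witness.
    by exists beta; split=> //; left; exists r.
  by exists beta; split=> //; right; exists p.
have S1sat beta : beta \in C1 -> S1 `<=` sat beta.
  by rewrite E1 => bC y /(_ _ bC).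
case=> beta [bC [[r [rR [rb [[q [C2q nbq]] nr]]]] | [p [pP [pb [[q [C2q nbq]] np]]]]]].
  have S1r : recedes S1 r by rewrite G1; exact: gen_recedes.
  have nC2r : ~ recedes (con C2) r.
    by move=> C2r; apply: nr; split=> //; apply: contraNneq vG => <-.
  have [z hz nz] := poly_hull_escape_ray S10 (S1sat _ bC) S1r rb C2q nbq nC2r.
  by move=> hull_eq; apply: nz; rewrite -hull_eq.
have S1p : S1 p by rewrite G1; exact: gen_point.
have [z hz nz] := poly_hull_escape_point (S1sat _ bC) S1p pb np C2q nbq.
by move=> hull_eq; apply: nz; rewrite -hull_eq.
Qed.
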